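(* Let $(X,\mu)$ be a standard probability space and let $T_1,\dots,T_n$ be measure-preserving Borel bijections of $(X,\mu)$ with pairwise disjoint supports. Suppose there are pairwise relatively prime integers $p_1,\dots,p_n\geq2$ such that for each $k\in\{1,\dots,n\}$, every $T_k$-orbit is finite and its cardinality divides a power of $p_k$. Then for every $k\in\{1,\dots,n\}$, $T_k$ belongs to the closure, for the uniform topology, of the group generated by $T_1T_2\cdots T_n$.
   Context: The support of $T$ is $\{x:T(x)\neq x\}$. The uniform topology on the group of measure-preserving bijections of $(X,\mu)$ (identified up to null sets) is given by the metric $d_u(T,U)=\mu(\{x:T(x)\neq U(x)\})$. *)

From HB Require Import structures.
From mathcomp Require Import all_boot all_order all_algebra.
From mathcomp Require Import all_classical all_reals all_analysis.
Set Implicit Arguments. Unset Strict Implicit. Unset Printing Implicit Defensive.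
Import Order.TTheory GRing.Theory Num.Theory.
Local Open Scope classical_set_scope.
Local Open Scope ring_scope.

(* A standard Borel space: Borel-isomorphic to a Borel subset of the reals
   (Kuratowski's characterization). *)
Definition standard_borel (R : realType) d (X : measurableType d) : Prop :=
  exists f : X -> R, [/\ injective f, measurable_fun setT f,
    measurable (range f) & forall A : set X, measurable A -> measurable (f @` A)].

Definition mp_borel_bij (R : realType) d (X : measurableType d)
  (mu : set X -> \bar R) (T : X -> X) : Prop :=
  [/\ bijective T, measurable_fun setT T &
      forall A : set X, measurable A -> mu (T @^-1` A) = mu A].

Definition supp {X : Type} (T : X -> X) : set X := [set x | T x <> x].

(* the T-orbit of x (orbit of the Z-action generated by the bijection T):
   y = T^m x for some integer m, i.e. y = T^m x or x = T^m y with m : nat *)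
Definition z_orbit {X : Type} (T : X -> X) (x : X) : set X :=
  [set y | exists m : nat, iter m T x = y \/ iter m T y = x].

(* [set x | T x <> S^m x] for m : int, for a bijection S; for m = -(n+1)
   (Negz n) we use T x <> S^{-(n+1)} x  <->  S^{n+1} (T x) <> x. *)
Definition disagree_pow {X : Type} (S T : X -> X) (m : int) : set X :=
  match m with
  | Posz n => [set x | T x <> iter n S x]
  | Negz n => [set x | iter n.+1 S (T x) <> x]
  end.

(* T lies in the uniform closure of the cyclic group generated by S:
   for every eps > 0 some S^m (m : int) has d_u(T, S^m) < eps. *)
Definition in_uniform_closure_cyclic (R : realType) {X : Type}
  (mu : set X -> \bar R) (S T : X -> X) : Prop :=
  forall eps : R, 0 < eps -> exists m : int, (mu (disagree_pow S T m) < eps%:E)%E.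

From HB Require Import structures.
From mathcomp Require Import all_boot all_order all_algebra.
From mathcomp Require Import all_classical all_reals all_analysis.
From mathcomp Require Import measurable_realfun.
Import Order.TTheory GRing.Theory Num.Theory.
Set Implicit Arguments. Unset Strict Implicit. Unset Printing Implicit Defensive.
Local Open Scope classical_set_scope.

(* Let [S = T_1 \o ... \o T_n]. The supports are disjoint and [T_j]-invariant,
   so [S^m x = T_j^m x] whenever [x] is fixed by every [T_i], [i <> j]. A point
   whose [T_j]-orbit has size dividing [p_j^e] is fixed by [T_j^(p_j^e)], so the
   sets [B_E] of points moved by some [T_j^(p_j^E)] decrease to the empty set
   and [mu B_E < eps] for [E] large. By the Chinese remainder theorem there is
   an [m] with [m = 1 mod p_k^E] and [m = 0 mod p_j^E] for [j <> k]; then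
   [S^m] agrees with [T_k] outside [B_E]. *)

Section Iterates.
Variables (X : Type) (T : X -> X).

Lemma iter_mod P a x : iter P T x = x -> iter a T x = iter (a %% P) T x.
Proof.
move=> hP; rewrite {1}(divn_eq a P) addnC iterD.
suff -> : forall q, iter (q * P) T x = x by [].
by elim=> [|q IH] //; rewrite mulSn iterD IH hP.
Qed.

Lemma iter_fixed_dvdn P a x : iter P T x = x -> (P %| a)%N -> iter a T x = x.
Proof. by move=> hP /eqP Ha; rewrite (iter_mod a hP) Ha. Qed.

Hypothesis injT : injective T.

Lemma iter_inj m : injective (iter m T).
Proof. by elim: m => [|m IH] //= a b /injT /IH. Qed.

Lemma iter_inj_on_aperiodic x M :
  (forall k, (0 < k)%N -> (k < M)%N -> iter k T x <> x) ->
  {in `I_M &, injective (fun i => iter i T x)}.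
Proof.
move=> aper.
suff lt_neq i j : (i < j)%N -> (j < M)%N -> iter i T x <> iter j T x.
  move=> i j /set_mem /= iM /set_mem /= jM /= eij.
  by case: (ltngtP i j) => [ij|ji|//]; [case: (lt_neq i j)|case: (lt_neq j i)].
move=> ij jM; rewrite -(subnKC (ltnW ij)) iterD => /iter_inj eij.
apply: (aper (j - i)); rewrite ?subn_gt0 //.
exact: leq_ltn_trans (leq_subr _ _) jM.
Qed.

Lemma z_orbit_periodic x L : (0 < L)%N -> iter L T x = x ->
  z_orbit T x = (fun i => iter i T x) @` `I_L.
Proof.
move=> L0 xL; apply/seteqP; split; last by move=> _ [i _ <-]; exists i; left.
move=> y [m [<-|ymx]].
  by exists (m %% L); [rewrite /= ltn_mod|rewrite -iter_mod].
have yqL : iter ((m %/ L).+1 * L) T y = y.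
  apply: (@iter_inj m); rewrite -iterD addnC iterD ymx.
  by apply: iter_fixed_dvdn xL _; rewrite dvdn_mull.
have m_le : (m <= (m %/ L).+1 * L)%N.
  by rewrite mulSn addnC {1}(divn_eq m L) leq_add2l ltnW // ltn_mod.
exists (((m %/ L).+1 * L - m) %% L); first by rewrite /= ltn_mod.
by rewrite -iter_mod // -ymx -iterD subnK.
Qed.

Lemma finite_z_orbit_periodic x N : (z_orbit T x #= `I_N)%card ->
  exists L, (0 < L)%N && `[< iter L T x = x >].
Proof.
move=> cardN; apply: contrapT => aper.
have : {in `I_N.+1 &, injective (fun i => iter i T x)}.
  apply: iter_inj_on_aperiodic => k k0 _ xk; apply: aper.
  by exists k; rewrite k0; apply/asboolP.
move=> /inj_card_eq; rewrite card_eq_le => /andP[_ le_img].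
have img_sub : ((fun i => iter i T x) @` `I_N.+1 #<= z_orbit T x)%card.
  by apply: subset_card_le => _ [i _ <-]; exists i; left.
move: cardN; rewrite card_eq_le => /andP[le_orb _].
have := card_le_trans le_img (card_le_trans img_sub le_orb).
by rewrite card_le_II ltnn.
Qed.

(* The orbit of [x] is listed without repetition by the first [L] iterates,
   [L] the least period of [x]; hence [L = N]. *)
Lemma iter_card_z_orbit x N : (z_orbit T x #= `I_N)%card -> iter N T x = x.
Proof.
move=> cardN; case: (ex_minnP (finite_z_orbit_periodic cardN)).
move=> L /andP[L0 /asboolP xL] minL.
have aper k : (0 < k)%N -> (k < L)%N -> iter k T x <> x.
  move=> k0 kL xk; have := minL k; rewrite k0 leqNgt kL.
  by move=> /(_ (introT (asboolP _) xk)).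
have : (`I_L #= `I_N)%card.
  apply: card_eq_trans cardN; rewrite (z_orbit_periodic L0 xL) card_eq_sym.
  exact: inj_card_eq (iter_inj_on_aperiodic aper).
by move/card_eq_II => <-.
Qed.

End Iterates.

Section DisjointSupports.
Variables (X : Type) (I : finType) (T : I -> X -> X).
Hypothesis injT : forall i, injective (T i).
Hypothesis disjT : forall i j, i != j -> supp (T i) `&` supp (T j) = set0.

Definition fixed_off j x := forall i, i != j -> T i x = x.

Lemma fixed_off_T j x : fixed_off j x -> fixed_off j (T j x).
Proof.
move=> xj i ij; have [Tjx|Tjx] := pselect (T j x = x); first by rewrite Tjx xj.
apply: contrapT => moved.
have : (supp (T i) `&` supp (T j)) (T j x) by split=> // /injT.
by rewrite disjT.
Qed.

Lemma exists_fixed_off (j0 : I) x : exists j, fixed_off j x.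
Proof.
have [[j Tjx]|fixed] := pselect (exists j, T j x <> x); last first.
  by exists j0 => i _; apply: contrapT => Tix; apply: fixed; exists i.
exists j => i ij; apply: contrapT => Tix.
have : (supp (T i) `&` supp (T j)) x by [].
by rewrite disjT.
Qed.

Lemma big_comp_seq_fixed_off (r : seq I) j x : uniq r -> fixed_off j x ->
  (\big[(fun f g => f \o g)/idfun]_(i <- r) T i) x =
    if j \in r then T j x else x.
Proof.
move=> + xj; elim: r => [|a r IH]; first by rewrite big_nil.
move=> /= /andP[ar ur]; rewrite big_cons /= IH // in_cons.
have [<-|aj] := eqVneq a j; first by rewrite (negbTE ar).
by case: ifP => _; [apply: fixed_off_T|apply: xj].
Qed.

Local Notation S := (\big[(fun f g => f \o g)/idfun]_(i : I) T i).

Lemma iter_big_comp_fixed_off j x m :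
  fixed_off j x -> iter m S x = iter m (T j) x.
Proof.
move=> xj; suff : fixed_off j (iter m (T j) x) /\ iter m S x = iter m (T j) x.
  by case.
elim: m => [|m [IHfix IH]] //=; split; first exact: fixed_off_T.
by rewrite IH (big_comp_seq_fixed_off (index_enum_uniq I) IHfix) mem_index_enum.
Qed.

Lemma iter_big_comp_chinese (q : I -> nat) k m x :
  (forall j, iter (q j) (T j) x = x) -> m = 1 %[mod q k] ->
  (forall j, j != k -> (q j %| m)%N) -> iter m S x = T k x.
Proof.
move=> xq m1 m0; have [j xj] := exists_fixed_off k x.
rewrite (iter_big_comp_fixed_off m xj).
have [->|jk] := eqVneq j k.
  by rewrite (iter_mod m (xq k)) m1 -iter_mod.
by rewrite xj 1?eq_sym // (iter_fixed_dvdn (xq j)) ?m0.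
Qed.

End DisjointSupports.

Lemma exists_chinese_delta (I : finType) (q : I -> nat) k :
  (forall j, j != k -> coprime (q k) (q j)) ->
  exists m, m = 1 %[mod q k] /\ forall j, j != k -> (q j %| m)%N.
Proof.
move=> cop; pose Q := (\prod_(j | j != k) q j)%N.
have copQ : coprime (q k) Q.
  apply: (big_ind (coprime (q k))) => [|a b|j /cop] //; first exact: coprimen1.
  by rewrite coprimeMr => -> ->.
exists (chinese (q k) Q 1 0); split; first exact: chinese_modl.
move=> j jk; apply: dvdn_trans (_ : (Q %| _)%N).
  by rewrite /Q (bigD1 j) //= dvdn_mulr.
by rewrite /dvdn chinese_modr // mod0n.
Qed.

Local Open Scope ring_scope.

Lemma measurable_fun_iter d (X : measurableType d) (T : X -> X) m :
  measurable_fun setT T -> measurable_fun setT (iter m T).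
Proof.
move=> mT; elim: m => [|m IH]; first exact: measurable_id.
exact: measurableT_comp.
Qed.

Lemma measurable_neq_fun (R : realType) d (X : measurableType d) (f : X -> R)
    (g h : X -> X) :
  injective f -> measurable_fun setT f -> measurable_fun setT g ->
  measurable_fun setT h -> measurable [set x | g x <> h x].
Proof.
move=> finj mf mg mh.
have -> : [set x | g x <> h x] =
    setT `&` [set x | (EFin \o (f \o g)) x != (EFin \o (f \o h)) x].
  apply/seteqP; split=> x /=.
    by move=> gh; split=> //; apply/eqP => -[/finj].
  by move=> [_ /eqP fgh] gh; apply: fgh; rewrite gh.
apply: measurable_neqe => //; apply/measurable_EFinP; exact: measurableT_comp.
Qed.

Lemma nonincreasing_mu_lt (R : realType) d (X : measurableType d)
    (mu : {measure set X -> \bar R}) (B : (set X)^nat) (eps : R) :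
  (mu (B 0%N) < +oo)%E -> (forall E, measurable (B E)) -> nonincreasing_seq B ->
  \bigcap_E B E = set0 -> 0 < eps -> exists E, (mu (B E) < eps%:E)%E.
Proof.
move=> B0 mB niB capB eps0.
have : mu \o B @ \oo --> 0%E.
  by rewrite -(measure0 mu) -capB; apply: nonincreasing_cvg_mu; rewrite ?capB.
move/fine_cvgP => [finB /cvgr_lt /(_ _ eps0) Blt].
have [E [/= BEfin BElt]] := filter_ex (filterI finB Blt).
by exists E; rewrite -(fineK BEfin) lte_fin.
Qed.

Section MovedByPower.
Variables (X : Type) (I : finType) (T : I -> X -> X) (p : I -> nat).

Definition moved_by_pow E := [set x | exists j, iter (p j ^ E)%N (T j) x <> x].

Lemma moved_by_pow_nonincreasing : nonincreasing_seq moved_by_pow.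
Proof.
apply/nonincreasing_seqP => E; rewrite subsetEset => x [j xE1].
exists j => xE; apply: xE1; apply: iter_fixed_dvdn xE _.
by rewrite expnS dvdn_mull.
Qed.

Lemma bigcap_moved_by_pow :
  (forall j x, exists e, iter (p j ^ e)%N (T j) x = x) ->
  \bigcap_E moved_by_pow E = set0.
Proof.
move=> fixT; apply/seteqP; split=> // x movedx.
have /choice [e xe] : forall j, exists e, iter (p j ^ e)%N (T j) x = x.
  by move=> j; apply: fixT.
have [j xj] : moved_by_pow (\max_j e j) x by exact: movedx.
apply: xj; apply: iter_fixed_dvdn (xe j) _.
by rewrite dvdn_exp2l // (leq_bigmax j).
Qed.

End MovedByPower.

Lemma measurable_moved_by_pow (R : realType) d (X : measurableType d)
    (I : finType) (T : I -> X -> X) (p : I -> nat) (f : X -> R) E :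
  injective f -> measurable_fun setT f ->
  (forall j, measurable_fun setT (T j)) -> measurable (moved_by_pow T p E).
Proof.
move=> finj mf mT.
have -> : moved_by_pow T p E =
    \bigcup_(j in [set: I]) [set x | iter (p j ^ E)%N (T j) x <> id x].
  by apply/seteqP; split=> x [j]; [exists j|exists j].
apply: fin_bigcup_measurable => [|j _]; first exact: finite_finset.
apply: (measurable_neq_fun (h := id) finj mf) => //.
exact: measurable_fun_iter.
Qed.

Theorem corollary6p2 (R : realType) (d : measure_display) (X : measurableType d)
  (mu : probability X R) (n : nat) (T : 'I_n -> X -> X) (p : 'I_n -> nat) :
  standard_borel R X ->
  (forall k, mp_borel_bij mu (T k)) ->
  (forall i j, i != j -> supp (T i) `&` supp (T j) = set0) ->
  (forall k, (2 <= p k)%N) ->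
  (forall i j, i != j -> coprime (p i) (p j)) ->
  (forall k (x : X), exists N : nat,
      (z_orbit (T k) x #= `I_N)%card /\ exists e : nat, (N %| p k ^ e)%N) ->
  forall k, in_uniform_closure_cyclic mu
              (\big[(fun f g => f \o g)/idfun]_(i < n) T i) (T k).
Proof.
move=> [f [finj mf _ _]] mpT disjT _ copp orbT k eps eps0.
have injT j : injective (T j) by case: (mpT j) => /bij_inj.
have mT j : measurable_fun setT (T j) by case: (mpT j).
have fixT j x : exists e, iter (p j ^ e)%N (T j) x = x.
  have [N [cardN [e Npe]]] := orbT j x.
  by exists e; apply: iter_fixed_dvdn Npe; apply: iter_card_z_orbit cardN.
have [E muE] : exists E, (mu (moved_by_pow T p E) < eps%:E)%E.
  apply: nonincreasing_mu_lt => //.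
  - apply: le_lt_trans (ltry 1%R).
    exact: probability_le1 (measurable_moved_by_pow p 0 finj mf mT).
  - by move=> E; apply: measurable_moved_by_pow finj mf mT.
  - exact: moved_by_pow_nonincreasing.
  - exact: bigcap_moved_by_pow.
have [m [m1 m0]] : exists m,
    m = 1 %[mod p k ^ E] /\ forall j, j != k -> (p j ^ E %| m)%N.
  apply: exists_chinese_delta => j jk.
  by apply: coprimeXl; apply: coprimeXr; apply: copp; rewrite eq_sym.
have mS : measurable_fun setT (\big[(fun f g => f \o g)/idfun]_(i < n) T i).
  apply: (big_ind (measurable_fun setT)) => [|g h mg mh|i _]; last exact: mT.
  - exact: measurable_id.
  - exact: measurableT_comp.
exists (Posz m); apply: le_lt_trans muE; apply: le_measure; rewrite ?inE.
- by apply: (measurable_neq_fun finj mf (mT k)); apply: measurable_fun_iter.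
- exact: measurable_moved_by_pow finj mf mT.
move=> x /= Tkx; apply: contrapT => fixx; apply: Tkx; apply/esym.
apply: (iter_big_comp_chinese (q := fun j => (p j ^ E)%N) injT disjT _ m1 m0).
move=> j.
by apply: contrapT => xj; apply: fixx; exists j.
Qed.
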